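(* Let $Q(y)$ and $R(y)$ be probability distributions on the set of one-hot vectors $\{0,1\}^k\cap\Delta^{k-1}$. Let $\mathcal{P}_c[Q]$ denote the set of probability distributions $P(c)$ on $\Delta^{k-1}$ such that, for $c\sim P$, the one-hot vector $e_{\arg\max_j c_j}$ has distribution $Q$. Then $$\inf_{P(c)\in\mathcal{P}_c[Q]}W_\infty\bigl(P(c),R(y)\bigr)=0.5\,W_\infty\bigl(Q(y),R(y)\bigr).$$
   Context: $\Delta^{k-1}=\{c\in\mathbb{R}^k: c_j\ge 0,\ \sum_j c_j=1\}$; $e_i$ is the $i$-th standard basis vector. For probability distributions $P,Q$ on $\mathbb{R}^k$, $W_\infty(P,Q)=\inf_{\pi\in\Pi(P,Q)}\int\|u-v\|_\infty\,d\pi(u,v)$ over couplings $\pi$ of $P$ and $Q$ (optimal transport distance with ground cost $\|u-v\|_\infty$). Ties in $\arg\max$ are broken by a fixed rule (e.g. smallest index). (In the paper, $Q$ is the pseudo-label distribution $P_{\mathrm{pseudo}}(y)$ and $R$ is the target label distribution $P_T(y)$.) *)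

From HB Require Import structures.
From mathcomp Require Import all_boot all_order all_algebra.
From mathcomp Require Import all_classical all_reals all_analysis.
Set Implicit Arguments. Unset Strict Implicit. Unset Printing Implicit Defensive.
Import Order.TTheory GRing.Theory Num.Theory.
Import numFieldNormedType.Exports.
Local Open Scope classical_set_scope.
Local Open Scope ring_scope.

Definition vecR (R : realType) (k : nat) :=
  g_sigma_algebraType (@open 'rV[R]_k).
HB.instance Definition _ (R : realType) (k : nat) :=
  Measurable.on (vecR R k).

Definition simplex (R : realType) (k : nat) : set (vecR R k) :=
  [set c | (forall j, 0 <= c ord0 j) /\ \sum_j c ord0 j = 1].

Definition e_ (R : realType) (k : nat) (i : 'I_k) : vecR R k :=
  \row_j (i == j)%:R.

Definition onehots (R : realType) (k : nat) : set (vecR R k) :=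
  [set c | exists i, c = @e_ R k i].

(* i is the arg max of c, ties broken by the smallest index *)
Definition is_argmax (R : realType) (k : nat) (c : vecR R k) (i : 'I_k) : bool :=
  [forall j : 'I_k, c ord0 j <= c ord0 i] && [forall j : 'I_k, (j < i)%N ==> (c ord0 j < c ord0 i)].

Definition onehot_argmax (R : realType) (k : nat) (c : vecR R k) : vecR R k :=
  \row_j (is_argmax c j)%:R.

Definition coupling (R : realType) (k : nat)
    (P Q : probability (vecR R k) R) : set (probability (vecR R k * vecR R k)%type R) :=
  [set pi : probability (vecR R k * vecR R k)%type R | forall A : set (vecR R k), measurable A ->
      pi (A `*` setT) = P A /\ pi (setT `*` A) = Q A].

(* W_infty(P,Q) = inf over couplings pi of \int ||u - v||_infty dpi(u,v);
   `|_| on row vectors is the max norm (mx_norm). *)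
Definition W_inf (R : realType) (k : nat) (P Q : probability (vecR R k) R) : \bar R :=
  ereal_inf [set (\int[pi]_z (`| z.1 - z.2 | : R)%:E)%E | pi in coupling P Q].

Definition Pc (R : realType) (k : nat) (Q : probability (vecR R k) R) :
    set (probability (vecR R k) R) :=
  [set P : probability (vecR R k) R | P (@simplex R k) = 1%E /\
     forall A : set (vecR R k), measurable A ->
       P (@onehot_argmax R k @^-1` A) = Q A].

(* If P is in P_c[Q] and gamma couples P with R, pushing the first coordinate of
   gamma through c |-> e_{argmax c} couples Q with R, and
   ||e_{argmax c} - e_j|| <= 2 ||c - e_j||: unless argmax c = j, some l <> j has
   c_l >= c_j, while c_j >= 1 - ||c - e_j|| and c_l <= ||c - e_j||.  Hence
   W(P, R) >= W(Q, R) / 2.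
   Conversely, moving each pair (e_i, e_j) of a coupling of Q and R to
   (l e_i + (1 - l) e_j, e_j) with 1/2 < l <= 1 keeps the argmax at i, so the
   new first marginal lies in P_c[Q], and it scales the cost by l; letting l
   tend to 1/2 gives the matching upper bound. *)

From HB Require Import structures.
From mathcomp Require Import all_boot all_order all_algebra.
From mathcomp Require Import all_classical all_reals all_analysis.
From mathcomp Require Import measurable_realfun.
From mathcomp Require Import ring lra.
Import Order.TTheory GRing.Theory Num.Theory.
Import numFieldNormedType.Exports.
Local Open Scope classical_set_scope.
Local Open Scope ring_scope.

Section measurable_finite.
Context {d} {T : measurableType d}.

Lemma measurable_preimage_factor_fin (U : Type) (F : finType) (phi : T -> F)
    (G : F -> U) (Y : set U) :
  (forall a, measurable (phi @^-1` [set a])) -> measurable ((G \o phi) @^-1` Y).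
Proof.
move=> mphi.
have -> : (G \o phi) @^-1` Y = \bigcup_(a in G @^-1` Y) phi @^-1` [set a].
  by apply/seteqP; split => [x Yx | x [a Ya /= ->]] //; exists (phi x).
by apply: fin_bigcup_measurable => //; exact: finite_finset.
Qed.

Lemma measurable_forall (I : finType) (f : T -> I -> bool) :
  (forall i, measurable_fun setT (f ^~ i)) ->
  measurable_fun setT (fun x => [forall i, f x i]).
Proof.
move=> mf; apply: (measurable_fun_bool true).
have -> : setT `&` (fun x => [forall i, f x i]) @^-1` [set true] =
    \bigcap_(i in setT) (f ^~ i @^-1` [set true]).
  apply/seteqP; split => [x [_ /forallP fx] i _ | x fx] /=; first exact: fx.
  by split => //; apply/forallP => i; exact: fx.
apply: fin_bigcap_measurable => [|i _]; first exact: finite_finset.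
by rewrite -[X in measurable X]setTI; exact: mf.
Qed.

Lemma measurable_ffun_fiber (I : finType) (f : T -> I -> bool) (b : {ffun I -> bool}) :
  (forall i, measurable_fun setT (f ^~ i)) ->
  measurable ((fun x => [ffun i => f x i]) @^-1` [set b]).
Proof.
move=> mf.
have -> : (fun x => [ffun i => f x i]) @^-1` [set b] =
    \bigcap_(i in setT) (f ^~ i @^-1` [set b i]).
  apply/seteqP; split => [x /= <- i _ | x /= fb]; first by rewrite ffunE.
  by apply/ffunP => i; rewrite ffunE; exact: fb.
apply: fin_bigcap_measurable => [|i _]; first exact: finite_finset.
by rewrite -[X in measurable X]setTI; exact: mf.
Qed.

Lemma measurable_fun_bigmaxr (R : realType) (I : Type) (s : seq I) (f : I -> T -> R) :
  (forall i, measurable_fun setT (f i)) ->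
  measurable_fun setT (fun x => \big[Num.max/0]_(i <- s) f i x).
Proof.
move=> mf; elim: s => [|i s IHs].
  by under eq_fun do rewrite big_nil; exact: measurable_cst.
under eq_fun do rewrite big_cons.
exact: measurable_maxr.
Qed.

Lemma measure_eq_off_negligible {R : realType} {mu : {measure set T -> \bar R}}
    {N X Y : set T} :
  mu.-negligible N -> measurable X -> measurable Y ->
  (forall z, ~ N z -> X z <-> Y z) -> mu X = mu Y.
Proof.
move=> [M [mM M0 NM]] mX mY XY.
have muD Z : measurable Z -> mu Z = mu (Z `\` M).
  move=> mZ; rewrite (measureDI mu mZ mM).
  by rewrite (subset_measure0 (measurableI _ _ mZ mM) mM (@subIsetr _ _ _) M0) adde0.
rewrite (muD _ mX) (muD _ mY); congr (mu _); apply/seteqP.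
by split => z [Zz Mz]; split => //; apply/(XY z) => // /NM.
Qed.

End measurable_finite.

Lemma continuous_mxentry (R : realType) {m n} (i : 'I_m) (j : 'I_n) :
  continuous (fun c : 'M[R]_(m, n) => c i j).
Proof.
move=> c B /= hB.
exists (fun i' j' => if (i' == i) && (j' == j) then B else setT).
  move=> i' j'; case: ifP => [/andP[/eqP -> /eqP ->]|_]; [exact: hB | exact: filterT].
by move=> M /(_ i j); rewrite !eqxx.
Qed.

Section vector_measurability.
Context {R : realType} {k : nat}.

Lemma measurable_coord (i : 'I_1) (j : 'I_k) :
  measurable_fun setT (fun c : vecR R k => c i j).
Proof.
apply: (measurability (@RGenOpens.G R)); first exact: RGenOpens.measurableE.
move=> _ [_ [a [b ->] <-]].
apply: sub_sigma_algebra; rewrite setTI.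
by move/continuousP: (continuous_mxentry R i j); apply; exact: interval_open.
Qed.

Lemma measurable_set1_vec (v : vecR R k) : measurable [set v].
Proof.
rewrite -[X in measurable X]setCK; apply: measurableC; apply: sub_sigma_algebra.
apply: closed_openC; apply: accessible_closed_set1; apply: hausdorff_accessible.
exact: norm_hausdorff.
Qed.

Lemma measurable_onehots : measurable (@onehots R k).
Proof.
have -> : @onehots R k = \bigcup_(i in setT) [set e_ R i].
  by apply/seteqP; split => [x [i ->] | x [i _ ->]]; exists i.
apply: fin_bigcup_measurable => [|i _]; first exact: finite_finset.
exact: measurable_set1_vec.
Qed.

Lemma measurable_is_argmax (i : 'I_k) :
  measurable_fun setT (fun c : vecR R k => is_argmax c i).
Proof.
apply: measurable_and; apply: measurable_forall => j.
  exact: measurable_fun_ler (measurable_coord _ _) (measurable_coord _ _).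
case: (j < i)%N => /=; last exact: measurable_cst.
exact: measurable_fun_ltr (measurable_coord _ _) (measurable_coord _ _).
Qed.

(* [onehot_argmax] and [onehot_mix] factor through the finite type of argmax
   patterns, whose fibres are Borel: this gives their measurability without
   any continuity. *)
Definition argmax_pattern (c : vecR R k) : {ffun 'I_k -> bool} :=
  [ffun i => is_argmax c i].

Lemma measurable_argmax_pattern_fiber b : measurable (argmax_pattern @^-1` [set b]).
Proof. exact: measurable_ffun_fiber measurable_is_argmax. Qed.

Definition row_of_pattern (b : {ffun 'I_k -> bool}) : vecR R k := \row_j (b j)%:R.

Lemma onehot_argmaxE : @onehot_argmax R k = row_of_pattern \o argmax_pattern.
Proof. by apply/funext => c; apply/matrixP => a j; rewrite !mxE ffunE. Qed.

Lemma measurable_onehot_argmax_preimage (Y : set (vecR R k)) :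
  measurable (@onehot_argmax R k @^-1` Y).
Proof.
rewrite onehot_argmaxE.
exact: measurable_preimage_factor_fin measurable_argmax_pattern_fiber.
Qed.

Lemma measurable_onehot_argmax : measurable_fun setT (@onehot_argmax R k).
Proof. by move=> _ Y _; rewrite setTI; exact: measurable_onehot_argmax_preimage. Qed.

Definition onehot_mix (l : R) (z : vecR R k * vecR R k) : vecR R k :=
  l *: onehot_argmax z.1 + (1 - l) *: onehot_argmax z.2.

Lemma measurable_onehot_mix_preimage l (Y : set (vecR R k)) :
  measurable (onehot_mix l @^-1` Y).
Proof.
have -> : onehot_mix l =
    (fun b => l *: row_of_pattern b.1 + (1 - l) *: row_of_pattern b.2) \o
    (fun z => (argmax_pattern z.1, argmax_pattern z.2)).
  by apply/funext => z; rewrite /onehot_mix onehot_argmaxE.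
apply: measurable_preimage_factor_fin => -[b1 b2].
have -> : (fun z : vecR R k * vecR R k => (argmax_pattern z.1, argmax_pattern z.2))
    @^-1` [set (b1, b2)] =
    argmax_pattern @^-1` [set b1] `*` argmax_pattern @^-1` [set b2].
  by apply/seteqP; split => [[x y] /= [<- <-] | [x y] /= [-> ->]].
by apply: measurableX; exact: measurable_argmax_pattern_fiber.
Qed.

Lemma measurable_onehot_mix l : measurable_fun setT (onehot_mix l).
Proof. by move=> _ Y _; rewrite setTI; exact: measurable_onehot_mix_preimage. Qed.

Lemma measurable_mx_norm_dist :
  measurable_fun setT (fun z : vecR R k * vecR R k => `|z.1 - z.2|).
Proof.
have -> : (fun z : vecR R k * vecR R k => `|z.1 - z.2|) = (fun z =>
    \big[Num.max/0]_(ij <- index_enum ('I_1 * 'I_k)%type)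
      `|z.1 ij.1 ij.2 - z.2 ij.1 ij.2|).
  by apply/funext => z; rewrite [LHS]mx_normrE; apply: eq_bigr => ij _; rewrite !mxE.
apply: measurable_fun_bigmaxr => ij.
apply: measurableT_comp (@normr_measurable R setT) _.
by apply: measurable_funB; apply: measurableT_comp (measurable_coord _ _) _.
Qed.

End vector_measurability.

Section mx_norm_entries.
Context {R : realType} {m n : nat}.
Implicit Type x : 'M[R]_(m, n).

Lemma mx_norm_entry_le x (i : 'I_m) (j : 'I_n) : `|x i j| <= `|x|.
Proof.
rewrite [X in _ <= X]mx_normrE.
exact: (le_bigmax _ (fun ij : 'I_m * 'I_n => `|x ij.1 ij.2|) (i, j)).
Qed.

Lemma mx_norm_le x (a : R) : 0 <= a -> (forall i j, `|x i j| <= a) -> `|x| <= a.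
Proof. by move=> a0 xa; rewrite [X in X <= _]mx_normrE; apply: bigmax_le => // ij _. Qed.

End mx_norm_entries.

Section argmax_geometry.
Context {R : realType} {k : nat}.
Implicit Types (c u v : vecR R k) (i j : 'I_k).

Lemma onehot_argmax_strict c i :
  (forall j, j != i -> c ord0 j < c ord0 i) -> onehot_argmax c = e_ R i.
Proof.
move=> ci; apply/matrixP => a j; rewrite !mxE.
suff -> : is_argmax c j = (i == j) by [].
have [<- | ij] := eqVneq i j.
  apply/andP; split; apply/forallP => l.
    by have [-> // | /ci/ltW] := eqVneq l i.
  by apply/implyP => li; apply: ci; rewrite neq_ltn li.
apply/negbTE; rewrite negb_and; apply/orP; left.
by apply/forallPn; exists i; rewrite -ltNge ci // eq_sym.
Qed.

Lemma onehot_argmax_e i : onehot_argmax (e_ R i) = e_ R i.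
Proof.
apply: onehot_argmax_strict => j ji; rewrite !mxE eqxx eq_sym (negbTE ji).
exact: ltr01.
Qed.

Lemma onehot_argmax_mix (l : R) i j : 2^-1 < l ->
  onehot_argmax (l *: e_ R i + (1 - l) *: e_ R j) = e_ R i.
Proof.
move=> l_gt; apply: onehot_argmax_strict => h hi; rewrite !mxE eqxx eq_sym (negbTE hi).
by case: (j == h); case: (j == i); rewrite /= ?mulr1n ?mulr0n; lra.
Qed.

Lemma onehot_mix_e (l : R) i j :
  onehot_mix l (e_ R i, e_ R j) = l *: e_ R i + (1 - l) *: e_ R j.
Proof. by rewrite /onehot_mix /= !onehot_argmax_e. Qed.

Lemma argmax_rival c j : onehot_argmax c != e_ R j ->
  exists2 l, l != j & c ord0 j <= c ord0 l.
Proof.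
move=> /eqP cj; have /existsP[l] : [exists l, is_argmax c l != (j == l)].
  apply: contra_notT cj; rewrite negb_exists => /forallP cj.
  by apply/matrixP => a l; rewrite !mxE; move/negPn/eqP: (cj l) ->.
have [<- | jl] := eqVneq j l.
  rewrite eqb_id /is_argmax negb_and => /orP[] /forallPn[l'].
    rewrite -ltNge => /[dup] cl' /ltW; exists l' => //.
    by apply: contraTneq cl' => ->; rewrite ltxx.
  rewrite negb_imply -leNgt => /andP[l'j cjl']; exists l' => //.
  by rewrite neq_ltn l'j.
rewrite eqbF_neg negbK => /andP[/forallP /(_ j) cjl _].
by exists l; rewrite // eq_sym.
Qed.

Lemma onehot_argmax_sub_e_le1 c j : `|onehot_argmax c - e_ R j| <= 1.
Proof.
apply: mx_norm_le => // a h; rewrite !mxE.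
by case: (is_argmax c h); case: (j == h);
  rewrite /= ?mulr1n ?mulr0n ?subrr ?subr0 ?sub0r ?normrN ?normr0 ?normr1.
Qed.

Lemma onehot_argmax_dist_le c j :
  `|onehot_argmax c - e_ R j| <= 2 * `|c - e_ R j|.
Proof.
have [-> | /argmax_rival[l lj cjl]] := eqVneq (onehot_argmax c) (e_ R j).
  by rewrite subrr normr0 mulr_ge0.
apply: le_trans (onehot_argmax_sub_e_le1 c j) _.
have entry h : `|c ord0 h - (j == h)%:R| <= `|c - e_ R j|.
  by have := mx_norm_entry_le (c - e_ R j) ord0 h; rewrite !mxE.
have := entry j; have := entry l; rewrite eqxx eq_sym (negbTE lj) subr0 /=.
by rewrite !ler_norml; lra.
Qed.

Lemma mix_sub_dist (l : R) u v : 0 <= l ->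
  `|(l *: u + (1 - l) *: v) - v| = l * `|u - v|.
Proof.
move=> l0; have -> : l *: u + (1 - l) *: v - v = l *: (u - v).
  by apply/matrixP => a j; rewrite !mxE; ring.
by rewrite mx_normZ ger0_norm.
Qed.

Lemma simplex_e i : @simplex R k (e_ R i).
Proof.
split=> [j | ]; first by rewrite mxE ler0n.
rewrite (bigD1 i) //= big1 ?addr0 => [|j ji]; rewrite mxE ?eqxx //.
by rewrite eq_sym (negbTE ji).
Qed.

Lemma simplex_convex (l : R) u v : 0 <= l <= 1 ->
  @simplex R k u -> @simplex R k v -> @simplex R k (l *: u + (1 - l) *: v).
Proof.
move=> /andP[l0 l1] [u0 u1] [v0 v1]; split => [j | ].
  by rewrite !mxE addr_ge0 // mulr_ge0 // subr_ge0.
under eq_bigr do rewrite !mxE.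
by rewrite big_split /= -!mulr_sumr u1 v1 !mulr1 addrC subrK.
Qed.

End argmax_geometry.

Lemma lee_half_mul (R : realType) (x c : \bar R) : (0 <= c)%E ->
  (forall l : R, 2^-1 < l -> l <= 1 -> (x <= l%:E * c)%E) -> (x <= (2^-1)%:E * c)%E.
Proof.
case: c => [r | _ _ | //]; last by rewrite muleC gt0_mulye ?lte_fin ?invr_gt0 // leey.
rewrite lee_fin => r0 xr; apply/lee_addgt0Pr => e e0.
pose t := Num.min (2^-1) (e / (r + 1)).
have r1_gt0 : 0 < r + 1 by rewrite ltr_wpDl.
have t_gt0 : 0 < t by rewrite lt_min invr_gt0 ltr0n divr_gt0.
have t_le : t <= 2^-1 by rewrite ge_min lexx.
have tr_le : t * r <= e.
  apply: (@le_trans _ _ (e / (r + 1) * r)).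
    by rewrite ler_wpM2r // ge_min lexx orbT.
  by rewrite mulrAC ler_pdivrMr // ler_wpM2l ?ltW // ltrDl.
apply: le_trans (xr (2^-1 + t) _ _) _; [lra | lra |].
by rewrite -EFinM -EFinD lee_fin mulrDl lerD2l.
Qed.

Section couplings.
Context {R : realType} {k : nat}.
Local Notation V := (vecR R k).

Lemma coupling_negligible {P1 P2 : probability V R} {gamma : probability (V * V)%type R}
    {A B : set V} :
  measurable A -> measurable B -> coupling P1 P2 gamma ->
  P1 A = 1%E -> P2 B = 1%E -> gamma.-negligible (~` (A `*` B)).
Proof.
move=> mA mB cp PA PB.
have nA : gamma.-negligible (~` A `*` setT).
  exists (~` A `*` setT); split => //.
    by apply: measurableX => //; exact: measurableC.
  by rewrite (cp _ (measurableC mA)).1 probability_setC // PA subee.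
have nB : gamma.-negligible (setT `*` ~` B).
  exists (setT `*` ~` B); split => //.
    by apply: measurableX => //; exact: measurableC.
  by rewrite (cp _ (measurableC mB)).2 probability_setC // PB subee.
apply: negligibleS (negligibleU nA nB) => -[x y] /= xy.
by have [Ax | nAx] := pselect (A x); [right; split => // By; apply: xy | left].
Qed.

Lemma coupling_onehot_pairs {Q Rt : probability V R}
    {gamma : probability (V * V)%type R} :
  Q (@onehots R k) = 1%E -> Rt (@onehots R k) = 1%E -> coupling Q Rt gamma ->
  gamma.-negligible [set z | ~ exists i j, z = (e_ R i, e_ R j)].
Proof.
move=> QO RtO cp.
have := coupling_negligible measurable_onehots measurable_onehots cp QO RtO.
apply: negligibleS.
by move=> [x y] /= nij [[i xi] [j yj]]; apply: nij; exists i, j; rewrite xi yj.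
Qed.

Definition push_fst (gamma : probability (V * V)%type R) {g : V * V -> V}
    (mg : measurable_fun setT g) : probability (V * V)%type R :=
  distribution gamma (mfun_Sub (mem_set (measurable_fun_pair mg measurable_snd))).

Lemma push_fstE (gamma : probability (V * V)%type R) {g : V * V -> V}
    (mg : measurable_fun setT g) (A : set (V * V)) :
  push_fst gamma mg A = gamma ((fun z => (g z, z.2)) @^-1` A).
Proof. by []. Qed.

Lemma push_fst_coupling {P1 P2 P : probability V R} {gamma : probability (V * V)%type R}
    {g : V * V -> V} (mg : measurable_fun setT g) :
  coupling P1 P2 gamma -> (forall A, measurable A -> gamma (g @^-1` A) = P A) ->
  coupling P P2 (push_fst gamma mg).
Proof.
move=> cp gP A mA; rewrite !push_fstE; split.
  by rewrite -gP //; congr (gamma _); apply/seteqP; split => -[x y] /=; [case | split].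
by rewrite -(cp _ mA).2; congr (gamma _); apply/seteqP; split => -[x y] /= [].
Qed.

Lemma measurable_cost : measurable_fun setT (fun z : V * V => (`|z.1 - z.2|)%:E).
Proof. by apply/measurable_EFinP; exact: measurable_mx_norm_dist. Qed.

Lemma measurable_cost_fst {g : V * V -> V} (mg : measurable_fun setT g) :
  measurable_fun setT (fun z : V * V => (`|g z - z.2|)%:E).
Proof.
apply/measurable_EFinP.
have := measurableT_comp measurable_mx_norm_dist (measurable_fun_pair mg measurable_snd).
exact.
Qed.

Lemma push_fst_cost (gamma : probability (V * V)%type R) {g : V * V -> V}
    (mg : measurable_fun setT g) :
  (\int[push_fst gamma mg]_z (`|z.1 - z.2|)%:E = \int[gamma]_z (`|g z - z.2|)%:E)%E.
Proof.
by rewrite ge0_integral_pushforward ?preimage_setT //; exact: measurable_cost.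
Qed.

Lemma half_W_inf_le_coupling_cost (Q Rt P : probability V R)
    (gamma : probability (V * V)%type R) :
  Rt (@onehots R k) = 1%E -> Pc Q P -> coupling P Rt gamma ->
  ((2^-1)%:E * W_inf Q Rt <= \int[gamma]_z (`|z.1 - z.2|)%:E)%E.
Proof.
move=> RtO [_ PQ] cp.
have mg := measurableT_comp measurable_onehot_argmax (@measurable_fst _ _ V V).
have cpQ : coupling Q Rt (push_fst gamma mg).
  apply: (push_fst_coupling _ cp) => A mA.
  rewrite -PQ // -(cp _ (measurable_onehot_argmax_preimage A)).1.
  by congr (gamma _); apply/seteqP; split => -[x y] /=; [split | case].
apply: le_trans (_ : (2^-1)%:E * \int[push_fst gamma mg]_z (`|z.1 - z.2|)%:E <= _)%E.
  apply: lee_wpmul2l; first by rewrite lee_fin invr_ge0.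
  by apply: ereal_inf_lbound; exists (push_fst gamma mg).
rewrite push_fst_cost -ge0_integralZl_EFin //; last exact: measurable_cost_fst.
apply: ae_ge0_le_integral => //.
- by apply: measurable_funeM; exact: measurable_cost_fst.
- exact: measurable_cost.
have := coupling_negligible measurableT measurable_onehots cp (probability_setT P) RtO.
apply: negligibleS => -[x y] /= nle [_ [j yj]]; apply: nle => _.
rewrite yj -EFinM lee_fin.
have := onehot_argmax_dist_le x j; lra.
Qed.

Definition mix_law (gamma : probability (V * V)%type R) (l : R) : probability V R :=
  distribution gamma (mfun_Sub (mem_set (measurable_onehot_mix l))).

Lemma mix_lawE (gamma : probability (V * V)%type R) (l : R) (A : set V) :
  mix_law gamma l A = gamma (onehot_mix l @^-1` A).
Proof. by []. Qed.

Section mix_law.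
Context {Q Rt : probability V R} {gamma : probability (V * V)%type R}.
Hypotheses (QO : Q (@onehots R k) = 1%E) (RtO : Rt (@onehots R k) = 1%E)
  (cp : coupling Q Rt gamma).

Let onehot_pairs_ae := coupling_onehot_pairs QO RtO cp.

Lemma Pc_mix_law (l : R) : 2^-1 < l -> l <= 1 -> Pc Q (mix_law gamma l).
Proof.
move=> l_gt l_le; split.
  rewrite mix_lawE -(probability_setT gamma).
  apply: (measure_eq_off_negligible onehot_pairs_ae) => //.
    exact: measurable_onehot_mix_preimage.
  move=> z /contrapT[i [j ->]]; split => // _.
  rewrite /preimage /= onehot_mix_e.
  by apply: simplex_convex; [apply/andP; split; lra | exact: simplex_e..].
move=> A mA; rewrite mix_lawE -(cp _ mA).1.
apply: (measure_eq_off_negligible onehot_pairs_ae) => //.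
- exact: measurable_onehot_mix_preimage.
- exact: measurableX.
move=> z /contrapT[i [j ->]] /=.
by rewrite onehot_mix_e onehot_argmax_mix //; split => [|[]].
Qed.

Lemma W_inf_mix_law_le (l : R) : 0 <= l ->
  (W_inf (mix_law gamma l) Rt <= l%:E * \int[gamma]_z (`|z.1 - z.2|)%:E)%E.
Proof.
move=> l0.
have mg : measurable_fun setT (onehot_mix l : V * V -> V) := measurable_onehot_mix l.
have cpl : coupling (mix_law gamma l) Rt (push_fst gamma mg).
  exact: push_fst_coupling cp _.
apply: le_trans (ereal_inf_lbound _) _; first by exists (push_fst gamma mg).
rewrite push_fst_cost -ge0_integralZl_EFin //; last exact: measurable_cost.
apply: ae_ge0_le_integral => //.
- exact: measurable_cost_fst.
- by move=> z _; rewrite mule_ge0 // lee_fin.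
- by apply: measurable_funeM; exact: measurable_cost.
apply: negligibleS onehot_pairs_ae => z nle [i [j zij]].
by apply: nle => _; rewrite zij /= onehot_mix_e -EFinM lee_fin mix_sub_dist.
Qed.

End mix_law.

End couplings.

Theorem mainTheorem5 (R : realType) (k : nat) (Q Rt : probability (vecR R k) R) :
  Q (@onehots R k) = 1%E -> Rt (@onehots R k) = 1%E ->
  ereal_inf [set W_inf P Rt | P in Pc Q] = ((2^-1)%:E * W_inf Q Rt)%E.
Proof.
move=> QO RtO; apply/eqP; rewrite eq_le; apply/andP; split.
- rewrite [W_inf Q Rt]/W_inf -ereal_inf_pZl ?invr_gt0 //.
  apply: le_ereal_inf_tmp => _ [_ [gamma cp <-] <-].
  apply: lee_half_mul => [|l l_gt l_le].
    by apply: integral_ge0 => z _; rewrite lee_fin.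
  have l0 : 0 <= l by lra.
  apply: (le_trans _ (W_inf_mix_law_le QO RtO cp _ l0)).
  apply: ereal_inf_lbound; exists (mix_law gamma l) => //.
  exact: Pc_mix_law QO RtO cp _ l_gt l_le.
- apply: le_ereal_inf_tmp => _ [P PQ <-].
  apply: le_ereal_inf_tmp => _ [gamma cp <-].
  exact: half_W_inf_le_coupling_cost RtO PQ cp.
Qed.
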